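(* Let $r\ge 2$ be an integer and let $G$ be a finite simple connected $K_{r+1}$-free graph of order $n$ with minimum degree $\delta$. Put $c=\lceil \delta/2\rceil$. Then $$\gamma^{0}_{st}(G)\le n-\frac{r}{r-1}\left(-c+\sqrt{c^2+4\,\frac{r-1}{r}\,c\,n}\right).$$ Moreover, the bound is sharp: for every integer $r\ge 2$ there exists a connected $K_{r+1}$-free graph (in fact an $r$-partite graph of order $r^2(r-1)$) for which equality holds.
   Context: A graph is $K_p$-free if it contains no complete graph $K_p$ as a subgraph. For a vertex $v$ of a graph $G=(V,E)$, $N(v)$ is its open neighborhood, and for $f:V\to\mathbb{R}$ and $B\subseteq V$ write $f(B)=\sum_{v\in B}f(v)$; $f(V)$ is the weight of $f$. An inverse signed total dominating function (ISTDF) of $G$ is a function $f:V\to\{-1,1\}$ such that $f(N(v))\le 0$ for every $v\in V$. The inverse signed total domination number $\gamma^{0}_{st}(G)$ is the maximum weight of an ISTDF of $G$. *)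

From HB Require Import structures.
From mathcomp Require Import all_boot all_order all_algebra.
Set Implicit Arguments. Unset Strict Implicit. Unset Printing Implicit Defensive.
Import Order.TTheory GRing.Theory Num.Theory.
Local Open Scope ring_scope.

Definition simple_graph (T : finType) (e : rel T) : Prop :=
  symmetric e /\ irreflexive e.

Definition connected_graph (T : finType) (e : rel T) : Prop :=
  forall x y : T, connect e x y.

Definition Kp_free (p : nat) (T : finType) (e : rel T) : Prop :=
  ~ exists g : 'I_p -> T,
      injective g /\ forall i j : 'I_p, i != j -> e (g i) (g j).

Definition r_partite (r : nat) (T : finType) (e : rel T) : Prop :=
  exists p : T -> 'I_r, forall x y, e x y -> p x != p y.

Definition deg (T : finType) (e : rel T) (x : T) : nat := #|[set y | e x y]|.

(* minimum degree (the initial value #|T| exceeds every degree) *)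
Definition min_deg (T : finType) (e : rel T) : nat :=
  \big[minn/#|T|]_(x : T) deg e x.

(* functions V -> {-1,1} are encoded as {ffun T -> bool}: true = 1, false = -1 *)
Definition sgn (b : bool) : int := if b then 1 else -1.

Definition fN (T : finType) (e : rel T) (f : {ffun T -> bool}) (v : T) : int :=
  \sum_(y : T | e v y) sgn (f y).

Definition weight (T : finType) (f : {ffun T -> bool}) : int :=
  \sum_(x : T) sgn (f x).

Definition ISTDF (T : finType) (e : rel T) (f : {ffun T -> bool}) : bool :=
  [forall v : T, fN e f v <= 0].

(* maximum weight of an ISTDF (the constant -1 function is always an ISTDF,
   and every weight is >= -#|T|, so the base value -#|T| is harmless) *)
Definition inv_signed_total_dom (T : finType) (e : rel T) : int :=
  \big[Num.max/ - (#|T|%:Z)]_(f : {ffun T -> bool} | ISTDF e f) weight f.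

Definition istd_bound (R : rcfType) (r n delta : nat) : R :=
  let c : R := (uphalf delta)%:R in
  n%:R - (r%:R / (r.-1)%:R) *
         (- c + Num.sqrt (c ^+ 2 + 4%:R * ((r.-1)%:R / r%:R) * c * n%:R)).

From HB Require Import structures.
From mathcomp Require Import all_boot all_order all_algebra.
From mathcomp Require Import zify ring lra.
Import Order.TTheory GRing.Theory Num.Theory.
Set Implicit Arguments. Unset Strict Implicit. Unset Printing Implicit Defensive.

(* Let P and M be the vertices where an ISTDF takes the values 1 and -1.
   Since every open neighbourhood has nonpositive weight, every vertex has
   at least as many neighbours in M as in P, hence at least c = ceil(delta/2)
   neighbours in M.  Counting the P-M edges from both sides gives
   c |P| <= 2 e(G[M]), and Turan's theorem for the K_{r+1}-free graph G[M]
   gives r * 2 e(G[M]) <= (r - 1) |M|^2.  Solving the resulting quadratic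
   inequality for |M| bounds the weight |P| - |M| = n - 2 |M|.  In the
   extremal graph M induces a complete r-partite graph with parts of size
   r - 1 and every vertex of P has exactly r - 1 neighbours in P and in M. *)

(* The slack in the conclusion is [((r+1) b - d)^2]. *)
Lemma turan_arith (r D DA b d : nat) :
  r.+1 * DA <= r * d ^ 2 -> D <= DA + 2 * b * d ->
  r.+2 * D <= r.+1 * (b + d) ^ 2.
Proof.
rewrite -!(ler_nat int) !(natrM, natrD, natrX) -!natr1.
have [r0 b0 d0] : [/\ (0 <= r%:R :> int)%R, (0 <= b%:R :> int)%R
                    & (0 <= d%:R :> int)%R] by rewrite !ler0n.
move: (r%:R)%R (D%:R)%R (DA%:R)%R (b%:R)%R (d%:R)%R r0 b0 d0.
move=> {r D DA b d} r D DA b d r0 b0 d0 hA hD.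
have sq : (0 <= ((r + 1) * b - d) ^+ 2)%R by rewrite sqr_ge0.
have h1 : ((r + 1 + 1) * D <= (r + 1 + 1) * (DA + 2 * b * d))%R.
  by rewrite ler_wpM2l //; lra.
have h2 : ((r + 1) * ((r + 1 + 1) * DA) <= (r + 1 + 1) * (r * d ^+ 2))%R.
  by rewrite mulrCA ler_wpM2l //; lra.
nra.
Qed.

Section Turan.

Variables (T : finType) (e : rel T).

Definition deg_in (X : {set T}) (v : T) : nat := \sum_(w in X) (e v w : nat).

(* Twice the number of edges of the subgraph induced by [X]. *)
Definition deg_sum (X : {set T}) : nat := \sum_(u in X) deg_in X u.

Definition clique (K : {set T}) : Prop := {in K &, forall x y, x != y -> e x y}.

Definition clique_free (p : nat) (S : {set T}) : Prop :=
  forall K : {set T}, K \subset S -> #|K| = p -> ~ clique K.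

Lemma deg_inE X v : deg_in X v = #|[set w in X | e v w]|.
Proof.
rewrite /deg_in -sum1_card big_mkcond [RHS]big_mkcond /=.
by apply: eq_bigr => w _; rewrite !inE; case: (w \in X); case: (e v w).
Qed.

Lemma big_setID_sub (F : T -> nat) (A S : {set T}) :
  A \subset S -> \sum_(u in S) F u = \sum_(u in A) F u + \sum_(u in S :\: A) F u.
Proof. by move=> sAS; rewrite (big_setID A) /= (setIidPr sAS). Qed.

Lemma deg_inD (A S : {set T}) v :
  A \subset S -> deg_in S v = deg_in A v + deg_in (S :\: A) v.
Proof. exact: big_setID_sub. Qed.

Lemma deg_inS (A S : {set T}) v : A \subset S -> deg_in A v <= deg_in S v.
Proof. by move=> sAS; rewrite (deg_inD v sAS) leq_addr. Qed.

Hypothesis e_sym : symmetric e.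
Hypothesis e_irr : irreflexive e.

Lemma sum_deg_in_sym (X Y : {set T}) :
  \sum_(u in X) deg_in Y u = \sum_(w in Y) deg_in X w.
Proof.
rewrite /deg_in exchange_big /=.
by apply: eq_bigr => w _; apply: eq_bigr => u _; rewrite e_sym.
Qed.

Lemma clique2_free_deg_sum S : clique_free 2 S -> deg_sum S = 0.
Proof.
move=> S_free; apply: big1 => u uS; apply: big1 => w wS.
case euw: (e u w) => //; exfalso.
have uw : u != w by apply: contraTneq euw => ->; rewrite e_irr.
apply: (S_free [set u; w]).
- by apply/subsetP => x /set2P[]->.
- by rewrite cards2 uw.
- by move=> x y /set2P[]-> /set2P[]->; rewrite ?eqxx // e_sym.
Qed.

(* A (p+1)-clique in the neighbourhood of v extends by v to a (p+2)-clique. *)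
Lemma clique_free_nbhd p S v :
  clique_free p.+2 S -> v \in S -> clique_free p.+1 [set w in S | e v w].
Proof.
move=> S_free vS K sKN cardK K_clique; apply: (S_free (v |: K)).
- apply/subsetP => x /setU1P[->//|xK].
  by have := subsetP sKN _ xK; rewrite inE => /andP[].
- have vK : v \notin K.
    by apply/negP => /(subsetP sKN); rewrite inE e_irr andbF.
  by rewrite cardsU1 vK cardK.
- have evK x : x \in K -> e v x by move=> /(subsetP sKN); rewrite inE => /andP[].
  move=> x y /setU1P[->|xK] /setU1P[->|yK]; rewrite ?eqxx //.
  + by move=> _; exact: evK.
  + by move=> _; rewrite e_sym; exact: evK.
  + exact: K_clique.
Qed.

(* Induction on r through a vertex v of maximum degree in S: its
   neighbourhood A is K_{r+1}-free, and every vertex of S :\: A has degree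
   at most |A|. *)
Lemma turan_deg_sum r S : clique_free r.+2 S -> r.+1 * deg_sum S <= r * #|S| ^ 2.
Proof.
elim: r S => [|r IH] S S_free.
  by rewrite clique2_free_deg_sum.
have [->|[v0 v0S]] := set_0Vmem S; first by rewrite /deg_sum big_set0 muln0.
have [v vS vmax] := arg_maxnP (deg_in S) v0S.
set A := [set w in S | e v w]; set B := S :\: A.
have sAS : A \subset S by apply/subsetP => x; rewrite inE => /andP[].
have degv : deg_in S v = #|A| by rewrite deg_inE.
have cardS : #|S| = #|B| + #|A| by rewrite addnC -(cardsID A S) (setIidPr sAS).
have B_le u : u \in B -> deg_in S u <= #|A|.
  by rewrite -degv inE => /andP[_]; exact: vmax.
rewrite cardS; apply: (turan_arith (IH A (clique_free_nbhd S_free vS))).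
have sumA : \sum_(u in A) deg_in S u = deg_sum A + \sum_(u in A) deg_in B u.
  by rewrite /deg_sum -big_split /=; apply: eq_bigr => u _; rewrite (deg_inD _ sAS).
have AB : \sum_(u in A) deg_in B u <= #|B| * #|A|.
  rewrite sum_deg_in_sym -sum_nat_const; apply: leq_sum => w wB.
  by apply: leq_trans (B_le _ wB); exact: deg_inS.
have BS : \sum_(u in B) deg_in S u <= #|B| * #|A|.
  by rewrite -sum_nat_const; apply: leq_sum.
rewrite [deg_sum S](big_setID_sub _ sAS) sumA -/B; lia.
Qed.

End Turan.

Lemma Kp_free_clique_free (T : finType) (e : rel T) p S :
  Kp_free p e -> clique_free e p S.
Proof.
move=> Kfree K _ cardK K_clique; apply: Kfree.
pose g (i : 'I_p) := @enum_val _ (pred_of_set K) (cast_ord (esym cardK) i).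
have g_inj : injective g by move=> i j /enum_val_inj /(congr1 val) ij; exact: val_inj.
exists g; split=> // i j ij; apply: K_clique; try exact: enum_valP.
by rewrite (inj_eq g_inj).
Qed.

Lemma r_partite_Kp_free (T : finType) (e : rel T) r : r_partite r e -> Kp_free r.+1 e.
Proof.
move=> [p p_proper] [g [g_inj g_clique]].
have pg_inj : injective (p \o g).
  move=> i j /= pij; apply/eqP; apply: contraT => ij.
  by have := p_proper _ _ (g_clique _ _ ij); rewrite pij eqxx.
by have := leq_card _ pg_inj; rewrite !card_ord ltnn.
Qed.

Lemma min_deg_le (T : finType) (e : rel T) v : min_deg e <= deg e v.
Proof.
rewrite /min_deg; have : v \in index_enum T by rewrite mem_index_enum.
elim: (index_enum T) => [//|a s IH]; rewrite inE big_cons => /predU1P[<-|vs].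
  exact: geq_minl.
exact: leq_trans (geq_minr _ _) (IH vs).
Qed.

Lemma min_deg_ge (T : finType) (e : rel T) d :
  (forall x, d <= deg e x) -> d <= #|T| -> d <= min_deg e.
Proof.
move=> deg_ge d_le; rewrite /min_deg; elim/big_ind: _ => // x y dx dy.
by rewrite leq_min dx dy.
Qed.

Section SignedFunction.

Variables (T : finType) (e : rel T) (f : {ffun T -> bool}).

Let P := [set x | f x].

Lemma deg_deg_inC v : deg e v = deg_in e P v + deg_in e (~: P) v.
Proof.
rewrite /deg; have -> : [set y | e v y] = [set w in setT | e v w].
  by apply/setP => y; rewrite !inE.
by rewrite -deg_inE (deg_inD _ _ (subsetT P)) setTD.
Qed.

Lemma fN_deg_in v : fN e f v = ((deg_in e P v)%:R - (deg_in e (~: P) v)%:R)%R.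
Proof.
rewrite /fN /deg_in [LHS]big_mkcond !natr_sum !(big_mkcond (fun i => i \in _)) /= -sumrB.
by apply: eq_bigr => w _; rewrite !inE; case: (e v w); case: (f w).
Qed.

Lemma weight_card : weight f = (#|P|%:R - #|~: P|%:R)%R.
Proof.
rewrite /weight -!sum1_card !natr_sum !(big_mkcond (fun i => i \in _)) /= -sumrB.
by apply: eq_bigr => w _; rewrite !inE; case: (f w).
Qed.

Lemma istdf_card_bound q :
  simple_graph e -> Kp_free q.+2 e -> ISTDF e f ->
  uphalf (min_deg e) * #|P| * q.+1 <= q * #|~: P| ^ 2.
Proof.
move=> [e_sym e_irr] Kfree /forallP f_istdf.
have P_le_M v : deg_in e P v <= deg_in e (~: P) v.
  by have := f_istdf v; rewrite fN_deg_in subr_le0 ler_nat.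
have c_le_M v : uphalf (min_deg e) <= deg_in e (~: P) v.
  rewrite leq_uphalf_double -addnn; apply: leq_trans (min_deg_le e v) _.
  by rewrite deg_deg_inC leq_add2r.
have cP_le : uphalf (min_deg e) * #|P| <= deg_sum e (~: P).
  apply: (@leq_trans (\sum_(v in P) deg_in e (~: P) v)).
    by rewrite mulnC -sum_nat_const; apply: leq_sum => v _.
  by rewrite sum_deg_in_sym //; apply: leq_sum => u _.
have M_free := Kp_free_clique_free (S := ~: P) Kfree.
rewrite mulnC; apply: leq_trans _ (turan_deg_sum e_sym e_irr M_free).
by rewrite leq_mul2l cP_le orbT.
Qed.

End SignedFunction.

Local Open Scope ring_scope.

(* [c + 2 (r - 1) m / r] dominates the square root. *)
Lemma sqrt_quadratic_le (R : rcfType) (r c p m : R) :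
  1 < r -> 0 <= c -> 0 <= m -> c * p * r <= (r - 1) * m ^+ 2 ->
  r / (r - 1) * (- c + Num.sqrt (c ^+ 2 + 4%:R * ((r - 1) / r) * c * (p + m)))
    <= 2%:R * m.
Proof.
move=> r1 c0 m0 hcp.
have r_gt0 : 0 < r by lra.
have r1_gt0 : 0 < r - 1 by lra.
have [r_neq0 r1_neq0] := (lt0r_neq0 r_gt0, lt0r_neq0 r1_gt0).
have [r_ge0 r1_ge0] := (ltW r_gt0, ltW r1_gt0).
set K := _ + _ * _; set Y := c + 2%:R * (r - 1) * m / r.
have Y0 : 0 <= Y.
  by apply: addr_ge0 => //; rewrite divr_ge0 ?mulr_ge0 ?ler0n.
have KY : K <= Y ^+ 2.
  rewrite -subr_ge0.
  have -> : Y ^+ 2 - K = 4%:R * (r - 1) / r ^+ 2 * ((r - 1) * m ^+ 2 - c * p * r).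
    by rewrite /Y /K; field.
  by rewrite mulr_ge0 ?subr_ge0 // divr_ge0 ?sqr_ge0 ?mulr_ge0 ?ler0n.
have sqrtK : Num.sqrt K <= Y.
  by rewrite -(ger0_norm Y0) -sqrtr_sqr ler_sqrt // exprn_ge0.
have -> : 2%:R * m = r / (r - 1) * (- c + Y).
  by rewrite /Y; field; rewrite r_neq0.
by rewrite ler_wpM2l ?lerD2l // divr_ge0.
Qed.

Lemma istd_bound_ge (R : rcfType) (r d p m : nat) : (1 < r)%N ->
  (uphalf d * p * r <= r.-1 * m ^ 2)%N ->
  p%:R - m%:R <= istd_bound R r (p + m) d.
Proof.
move=> r_gt1 hcp.
have rR : 1 < r%:R :> R by rewrite ltr1n.
have predrR : r.-1%:R = r%:R - 1 :> R by rewrite -subn1 natrB // ltnW.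
have hcpR : (uphalf d)%:R * p%:R * r%:R <= (r%:R - 1) * m%:R ^+ 2 :> R.
  by rewrite -predrR -natrX -!natrM ler_nat.
have := sqrt_quadratic_le rR (ler0n _ _) (ler0n _ _) hcpR.
rewrite /istd_bound predrR natrD; lra.
Qed.

Lemma istd_le_bound (R : rcfType) (r : nat) (T : finType) (e : rel T) :
  (1 < r)%N -> simple_graph e -> Kp_free r.+1 e ->
  (inv_signed_total_dom e)%:~R <= istd_bound R r #|T| (min_deg e).
Proof.
case: r => [//|q] q_gt0 e_simple Kfree.
have weight_le f : ISTDF e f -> (weight f)%:~R <= istd_bound R q.+1 #|T| (min_deg e).
  move=> f_istdf; rewrite weight_card rmorphB !rmorph_nat /= -(cardsC [set x | f x]).
  exact/istd_bound_ge/istdf_card_bound.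
have base_le : (- #|T|%:Z)%:~R <= istd_bound R q.+1 #|T| (min_deg e).
  have := @istd_bound_ge R q.+1 (min_deg e) 0 #|T| q_gt0.
  by rewrite mulrNz -pmulrn muln0 mul0n add0n sub0r; apply.
rewrite /inv_signed_total_dom; elim/big_ind: _ => // x y hx hy.
by rewrite /Order.max; case: ifP.
Qed.

Local Close Scope ring_scope.

(* Vertex ((a, b), k) has colour a, block b and layer k, where r = s + 2.
   Layer 0 is the complete r-partite graph with colour classes of size
   r - 1; in every other layer, each block is a K_r, joined to the same
   block of layer 0 by all edges between distinct colours. *)
Local Notation sharp_vertex s := ('I_s.+2 * 'I_s.+1 * 'I_s.+2)%type.

Section SharpGraph.

Variable s : nat.

Definition sharp_rel : rel (sharp_vertex s) := fun x y =>
  (x.1.1 != y.1.1) && ((x.2 == ord0) && (y.2 == ord0) ||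
     (x.1.2 == y.1.2) && [|| x.2 == y.2, x.2 == ord0 | y.2 == ord0]).

Lemma sharp_simple : simple_graph sharp_rel.
Proof.
split=> [[[a b] k] [[a' b'] k']|x]; last by rewrite /sharp_rel eqxx.
rewrite /sharp_rel /= [a' == a]eq_sym [b' == b]eq_sym [k' == k]eq_sym.
by case: (k == ord0); case: (k' == ord0); case: (k == k'); case: (b == b').
Qed.

Lemma sharp_partite : r_partite s.+2 sharp_rel.
Proof. by exists (fun x => x.1.1) => x y /andP[]. Qed.

Lemma card_sharp : #|{: sharp_vertex s}| = s.+2 ^ 2 * (s.+2 - 1).
Proof. by rewrite !card_prod !card_ord subn1 mulnAC -mulnn. Qed.

Definition layer1 : 'I_s.+2 := inord 1.

Lemma layer1_neq0 : layer1 != ord0.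
Proof. by apply/eqP => /(congr1 val); rewrite /= inordK. Qed.

(* Every vertex is joined to a vertex of layer 0 of another colour, and any
   two vertices of layer 0 are at distance at most 2. *)
Lemma sharp_connected : connected_graph sharp_rel.
Proof.
pose o : sharp_vertex s := ((ord0, ord0), ord0).
have layer0_to_o a b : connect sharp_rel ((a, b), ord0) o.
  have [->|a0] := eqVneq a ord0; last by apply/connect1; rewrite /sharp_rel /= a0.
  apply: (@connect_trans _ _ ((layer1, ord0), ord0)); apply: connect1;
    by rewrite /sharp_rel /= ?eqxx ?andbT // ?layer1_neq0 // eq_sym layer1_neq0.
have to_o x : connect sharp_rel x o.
  case: x => [[a b] k]; pose a' := if a == ord0 then layer1 else ord0.
  apply: connect_trans (layer0_to_o a' b); apply/connect1.
  rewrite /sharp_rel /= !eqxx /= !orbT andbT /a'.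
  by case: (eqVneq a ord0) => [->|//]; rewrite eq_sym layer1_neq0.
move=> x y; apply: connect_trans (to_o x) _.
by rewrite sym_connect_sym; [exact: to_o | case: sharp_simple].
Qed.

Definition other_layer (k : 'I_s.+2) : 'I_s.+2 := if k == ord0 then layer1 else ord0.

Lemma other_layer_neq k : other_layer k != k.
Proof.
rewrite /other_layer; have [->|k0] := eqVneq k ord0; first exact: layer1_neq0.
by rewrite eq_sym.
Qed.

Definition block_mates (x : sharp_vertex s) (k : 'I_s.+2) : {set sharp_vertex s} :=
  [set ((a, x.1.2), k) | a in [set~ x.1.1]].

Lemma card_block_mates x k : #|block_mates x k| = s.+1.
Proof. by rewrite card_imset ?cardsC1 ?card_ord // => u v []. Qed.

Lemma block_mates_disjoint x :
  [disjoint block_mates x x.2 & block_mates x (other_layer x.2)].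
Proof.
rewrite -setI_eq0; apply/eqP/setP => y; rewrite !inE.
apply/andP => -[/imsetP[u _ ->] /imsetP[w _ /(congr1 snd)]] /= h.
by move: (other_layer_neq x.2); rewrite -h eqxx.
Qed.

Lemma block_mates_sub_nbhd x :
  block_mates x x.2 :|: block_mates x (other_layer x.2) \subset [set y | sharp_rel x y].
Proof.
apply/subsetP => y; rewrite !inE => /orP[] /imsetP[a a_ne ->];
  move: a_ne; rewrite !inE /sharp_rel /= eq_sym => -> /=; rewrite !eqxx /= ?orbT //.
by rewrite /other_layer; case: (x.2 == ord0); rewrite /= ?orbT ?eqxx.
Qed.

Lemma sharp_deg_ge x : 2 * s.+1 <= deg sharp_rel x.
Proof.
apply: leq_trans (subset_leq_card (block_mates_sub_nbhd x)).
by rewrite cardsU (disjoint_setI0 (block_mates_disjoint x)) cards0 subn0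
  !card_block_mates mul2n addnn.
Qed.

Lemma sharp_min_deg : min_deg sharp_rel = 2 * s.+1.
Proof.
pose x : sharp_vertex s := ((ord0, ord0), layer1).
have nbhd_x : [set y | sharp_rel x y] \subset
              block_mates x x.2 :|: block_mates x (other_layer x.2).
  apply/subsetP => -[[a b] k]; rewrite !inE /sharp_rel /= => /andP[a0].
  rewrite (negbTE layer1_neq0) /= => /andP[/eqP<-] /orP[/eqP<-|/eqP->].
  - by apply/orP; left; apply/imsetP; exists a; rewrite // !inE eq_sym.
  - apply/orP; right; apply/imsetP; exists a; first by rewrite !inE eq_sym.
    by rewrite /other_layer (negbTE layer1_neq0).
apply/eqP; rewrite eqn_leq; apply/andP; split.
  apply: leq_trans (min_deg_le _ x) _; apply: leq_trans (subset_leq_card nbhd_x) _.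
  by rewrite cardsU !card_block_mates mul2n addnn leq_subr.
apply: min_deg_ge; first exact: sharp_deg_ge.
by rewrite card_sharp subn1 leq_pmul2r // mul2n -addnn leq_add // expnS leq_pmulr.
Qed.

Definition sharp_fun : {ffun sharp_vertex s -> bool} := [ffun x => x.2 != ord0].

(* Matches the positive neighbours of [v] injectively with negative ones:
   from layer 0 the layer index shifted down serves as a block index. *)
Definition sharp_match (v w : sharp_vertex s) : sharp_vertex s :=
  if v.2 == ord0 then ((w.1.1, inord w.2.-1), ord0) else ((w.1.1, w.1.2), ord0).

Lemma sharp_istdf : ISTDF sharp_rel sharp_fun.
Proof.
apply/forallP => v; rewrite fN_deg_in subr_le0 ler_nat !deg_inE.
set A := [set w in _ | _]; set B := [set w in _ | _].
have match_inj : {in A &, injective (sharp_match v)}.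
  move=> [[a1 b1] k1] [[a2 b2] k2]; rewrite !inE /sharp_fun !ffunE /=.
  move=> /andP[k1_neq0 e1] /andP[k2_neq0 e2].
  move: e1 e2; rewrite /sharp_match /sharp_rel /= (negbTE k1_neq0) (negbTE k2_neq0).
  have [v0|v0] := eqVneq v.2 ord0 => /=.
    rewrite ?andbF /= => /and3P[_ /eqP<- _] /and3P[_ /eqP<- _].
    case=> -> /(congr1 val); rewrite /= !inordK; first last.
    - by have := ltn_ord k1; case: (nat_of_ord k1) => //= n; lia.
    - by have := ltn_ord k2; case: (nat_of_ord k2) => //= n; lia.
    move=> k12; congr (_, _); apply: val_inj => /=.
    by move: k1_neq0 k2_neq0 k12; rewrite -!(inj_eq val_inj) /=; lia.
  rewrite ?orbF ?andbF /= => /and3P[_ /eqP<- /eqP<-] /and3P[_ /eqP<- /eqP<-].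
  by case=> ->.
have match_sub : sharp_match v @: A \subset B.
  apply/subsetP => y /imsetP[[[a b] k] w_in ->]; move: w_in.
  rewrite !inE /sharp_fun !ffunE /sharp_match /sharp_rel /= => /andP[k0 /andP[av h]].
  have [v0|v0] := eqVneq v.2 ord0; rewrite /= ?eqxx /= av /= ?andbT //.
  by rewrite orbT andbT; move: h; rewrite (negbTE v0) (negbTE k0) /= orbF => /andP[].
by rewrite -(card_in_imset match_inj) subset_leq_card.
Qed.

Lemma card_sharp_negative : #|~: [set x | sharp_fun x]| = s.+2 * s.+1.
Proof.
have -> : ~: [set x | sharp_fun x] = setX [set: 'I_s.+2 * 'I_s.+1] [set ord0].
  by apply/setP => -[ab k]; rewrite !inE /sharp_fun ffunE negbK.
by rewrite cardsX cardsT cards1 card_prod !card_ord muln1.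
Qed.

Local Open Scope ring_scope.

(* With [c = s + 1], the radicand is the square [((s + 1) (2 s + 3))^2]. *)
Lemma sharp_weight (R : rcfType) :
  (weight sharp_fun)%:~R = istd_bound R s.+2 #|{: sharp_vertex s}| (2 * s.+1).
Proof.
have card_pos : #|[set x | sharp_fun x]| = (#|{: sharp_vertex s}| - s.+2 * s.+1)%N.
  by rewrite -(cardsC [set x | sharp_fun x]) card_sharp_negative addnK.
have neg_le : (s.+2 * s.+1 <= s.+2 ^ 2 * (s.+2 - 1))%N.
  by rewrite subn1 leq_pmul2r // expnS leq_pmulr.
rewrite weight_card rmorphB !rmorph_nat /= card_pos card_sharp_negative card_sharp.
rewrite /istd_bound mul2n uphalf_double natrB // subn1 /= !(natrM, natrX).
rewrite -(natr1 s.+1) -!(natr1 s).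
set x : R := s%:R; have x0 : 0 <= x by rewrite ler0n.
have -> : (x + 1) ^+ 2 + 4%:R * ((x + 1) / (x + 1 + 1)) * (x + 1) *
            ((x + 1 + 1) ^+ 2 * (x + 1)) = ((x + 1) * (2%:R * x + 3%:R)) ^+ 2.
  by field; apply: lt0r_neq0; lra.
rewrite sqrtr_sqr ger0_norm; last by apply: mulr_ge0; lra.
by field; apply: lt0r_neq0; lra.
Qed.

End SharpGraph.

Local Open Scope ring_scope.

Theorem theorem2p4 (R : rcfType) (r : nat) (hr : (2 <= r)%N) :
  (forall (T : finType) (e : rel T),
      (0 < #|T|)%N -> simple_graph e -> connected_graph e -> Kp_free r.+1 e ->
      ((inv_signed_total_dom e)%:~R : R) <= istd_bound R r #|T| (min_deg e))
  /\
  (exists (T : finType) (e : rel T),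
      [/\ simple_graph e, connected_graph e, Kp_free r.+1 e, r_partite r e &
          #|T| = (r ^ 2 * (r - 1))%N] /\
      ((inv_signed_total_dom e)%:~R : R) = istd_bound R r #|T| (min_deg e)).
Proof.
split=> [T e _ e_simple _ Kfree|]; first exact: istd_le_bound.
case: r hr => [//|[//|s]] hr.
have [e_simple e_partite] := (@sharp_simple s, @sharp_partite s).
have Kfree := r_partite_Kp_free e_partite.
exists (sharp_vertex s), (@sharp_rel s); split.
  by split=> //; [exact: sharp_connected | exact: card_sharp].
apply/eqP; rewrite eq_le istd_le_bound //=.
rewrite sharp_min_deg -sharp_weight ler_int.
exact: le_bigmax_cond (@sharp_istdf s).
Qed.
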